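(* Let $p$ be a prime and $r \in \mathbb{N}$ with $r\ge 2$. Let $k \in \mathbb{N}$ and let $m \in \mathbb{N}$ such that $r(p-1)+1< 2p^m$. Then \[\mathsf{D}_k(C_p^r)\le \min \{(k(r-1)+1)p - r+1,\ (k-1)p^m + r(p-1)+1\}.\]
   Context: $C_p^r$ is the elementary abelian $p$-group of rank $r$. A sequence over a finite abelian group $G$ is a finite unordered list of elements with repetitions; zero-sum means its terms sum to $0$. $\mathsf{D}_k(G)$ is the smallest $\ell$ such that every sequence over $G$ of length at least $\ell$ has $k$ disjoint non-empty zero-sum subsequences. *)

From mathcomp Require Import all_boot all_order all_algebra.
From Stdlib Require Import ClassicalEpsilon.
Set Implicit Arguments. Unset Strict Implicit. Unset Printing Implicit Defensive.
Import GRing.Theory.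
Local Open Scope ring_scope.

(* A subsequence is given by a set of positions
   I : {set 'I_(size s)}; subsequences are disjoint iff their position sets
   are disjoint. *)
Definition has_k_disjoint_zero_sums (G : zmodType) (k : nat) (s : seq G) : Prop :=
  exists F : 'I_k -> {set 'I_(size s)},
    (forall j, F j != set0) /\
    (forall j, \sum_(i in F j) s`_i = 0) /\
    (forall j j', j != j' -> [disjoint F j & F j']).

Definition Dk_prop (G : finZmodType) (k l : nat) : Prop :=
  forall s : seq G, (l <= size s)%N -> has_k_disjoint_zero_sums k s.

Definition Dk_predb (G : finZmodType) (k : nat) : pred nat :=
  fun l => if excluded_middle_informative (Dk_prop G k l) then true else false.

(* D_k(G) = the smallest such l (defaults to 0 if no such l exists,
   which never happens for finite G). *)
Definition Dk (G : finZmodType) (k : nat) : nat :=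
  match excluded_middle_informative (exists l, Dk_predb G k l) with
  | left H => ex_minn H
  | right _ => 0%N
  end.

From mathcomp Require Import all_boot all_order all_algebra all_field.
From mathcomp Require Import zify.
From Stdlib Require Import ClassicalEpsilon.
Set Implicit Arguments. Unset Strict Implicit. Unset Printing Implicit Defensive.
Import GRing.Theory.
Local Open Scope ring_scope.

(* Polynomial method in set-function form: if [f : {set I} -> R] has degree
   less than [#|U|] as a multilinear polynomial in the indicator variables of
   [T], then the alternating sum of [f] over the subsets of [U] vanishes.  Over
   ['F_p] the indicator of "[T] is a zero-sum of size divisible by [p ^ m]" has
   degree [r(p-1) + p^m - 1], so any [r(p-1) + p^m] terms of [C_p^r] contain a
   nonempty zero-sum subsequence whose length [c p^m] is at most
   [r(p-1) + p^m]; the empty set would otherwise be the only contribution.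
   Such a subsequence is either short already, or long enough to split into two
   zero-sum parts (case [m = 0] applied to all but one of its terms), one of
   them of at most half its length.  Removing short zero-sum subsequences one
   at a time yields [k] disjoint ones. *)

(* [f] has degree at most [d] as a multilinear polynomial in the indicators
   of [T]: it is a sum of terms each of which only depends on [T :&: c] for
   some [c] with at most [d] elements. *)
Definition deg_le (R : pzRingType) (I : finType) (d : nat) (f : {set I} -> R) :=
  exists (J : finType) (c : J -> {set I}) (h : J -> {set I} -> R),
    [/\ forall j, (#|c j| <= d)%N, forall j T, h j T = h j (T :&: c j)
      & forall T, f T = \sum_j h j T].

Section DegreeOfSetFunctions.

Variables (R : pzRingType) (I : finType).
Implicit Types (f g : {set I} -> R) (A T U : {set I}).

Lemma deg_le_eq d f g : deg_le d f -> f =1 g -> deg_le d g.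
Proof. by move=> [J [c [h [cd hc fh]]]] fg; exists J, c, h; split=> // T; rewrite -fg. Qed.

Lemma deg_le_cst d (a : R) : deg_le d (fun _ : {set I} => a).
Proof.
exists 'I_1, (fun => set0), (fun _ _ => a); split=> [j|//|T].
  by rewrite cards0.
by rewrite big_ord1.
Qed.

Lemma deg_le_subset A : deg_le #|A| (fun T => (A \subset T)%:R : R).
Proof.
exists 'I_1, (fun => A), (fun _ T => (A \subset T)%:R); split=> // [j T|T].
  by rewrite subsetI subxx andbT.
by rewrite big_ord1.
Qed.

Lemma deg_leD d f g : deg_le d f -> deg_le d g -> deg_le d (fun T => f T + g T).
Proof.
move=> [J [c [h [cd hc fh]]]] [J' [c' [h' [cd' hc' gh']]]].
exists (J + J')%type, (fun x => match x with inl j => c j | inr j => c' j end),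
  (fun x T => match x with inl j => h j T | inr j => h' j T end).
split=> [[]|[]|T] //.
by rewrite big_sumType fh gh'.
Qed.

Lemma deg_leN d f : deg_le d f -> deg_le d (fun T => - f T).
Proof.
move=> [J [c [h [cd hc fh]]]]; exists J, c, (fun j T => - h j T).
by split=> // [j T|T]; [rewrite -hc | rewrite fh sumrN].
Qed.

Lemma deg_leM d e f g :
  deg_le d f -> deg_le e g -> deg_le (d + e) (fun T => f T * g T).
Proof.
move=> [J [c [h [cd hc fh]]]] [J' [c' [h' [cd' hc' gh']]]].
exists (J * J')%type, (fun x => c x.1 :|: c' x.2),
  (fun x T => h x.1 T * h' x.2 T); split.
- move=> [j j'] /=; rewrite cardsU (leq_trans (leq_subr _ _)) ?leq_add //.
- move=> [j j'] T /=; rewrite [in RHS]hc [in RHS]hc' -!setIA.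
  by rewrite setUK (setUC (c j)) setUK -hc -hc'.
- by move=> T; rewrite fh gh' big_distrlr pair_bigA.
Qed.

Lemma deg_leX d f k : deg_le d f -> deg_le (d * k) (fun T => f T ^+ k).
Proof.
move=> df; elim: k => [|k IHk]; first exact: deg_le_cst.
by rewrite mulnS; apply: (deg_le_eq (deg_leM df IHk)) => T; rewrite exprS.
Qed.

Lemma deg_le_sum d (K : finType) (P : pred K) (F : K -> {set I} -> R) :
  (forall x, P x -> deg_le d (F x)) -> deg_le d (fun T => \sum_(x | P x) F x T).
Proof.
move=> dF; elim: (index_enum K) => [|x s IHs].
  by apply: (deg_le_eq (deg_le_cst d 0)) => T; rewrite big_nil.
case Px: (P x).
  by apply: (deg_le_eq (deg_leD (dF x Px) IHs)) => T; rewrite big_cons Px.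
by apply: (deg_le_eq IHs) => T; rewrite big_cons Px.
Qed.

Lemma deg_le_prod d (K : finType) (F : K -> {set I} -> R) :
  (forall x, deg_le d (F x)) -> deg_le (d * #|K|) (fun T => \prod_x F x T).
Proof.
move=> dF; rewrite cardT enumT [index_enum K]unlock.
elim: (Finite.enum K) => [|x s IHs].
  by apply: (deg_le_eq (deg_le_cst _ 1)) => T; rewrite big_nil.
rewrite /= mulnS; apply: (deg_le_eq (deg_leM (dF x) IHs)) => T.
by rewrite big_cons.
Qed.

Lemma deg_le_sum_in (a : I -> R) : deg_le 1 (fun T : {set I} => \sum_(i in T) a i).
Proof.
have dF i : deg_le 1 (fun T => a i * ([set i] \subset T)%:R).
  rewrite -(cards1 i) -[X in deg_le X]add0n.
  exact: deg_leM (deg_le_cst _ _) (deg_le_subset _).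
apply: (deg_le_eq (deg_le_sum (P := predT) (fun i _ => dF i))) => T /=.
rewrite [RHS]big_mkcond; apply: eq_bigr => i _.
by rewrite sub1set; case: (i \in T); rewrite ?mulr1 ?mulr0.
Qed.

Lemma deg_le_bin a : deg_le a (fun T : {set I} => 'C(#|T|, a)%:R : R).
Proof.
have dF A : #|A| == a -> deg_le a (fun T => (A \subset T)%:R : R).
  by move/eqP <-; apply: deg_le_subset.
apply: (deg_le_eq (deg_le_sum dF)) => T /=.
rewrite -cards_draws -sum1_card natr_sum [LHS]big_mkcond [RHS]big_mkcond.
by apply: eq_bigr => A _; rewrite !inE; case: (A \subset T); case: (#|A| == a).
Qed.

Lemma alternating_sum_local B U (h : {set I} -> R) :
  (forall T, h T = h (T :&: B)) -> ~~ (U \subset B) ->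
  \sum_(T : {set I} | T \subset U) (-1) ^+ #|T| * h T = 0.
Proof.
move=> hB /subsetPn[x xU xNB].
pose tog (T : {set I}) := if x \in T then T :\ x else x |: T.
have togK : involutive tog.
  move=> T; rewrite {2}/tog; case: ifP => xT; rewrite /tog.
    by rewrite setD11 setD1K.
  by rewrite setU11 setU1K ?xT.
have in_tog T : (x \in tog T) = (x \notin T).
  by rewrite /tog; case: ifP; rewrite ?setD11 ?setU11.
pose F (T : {set I}) := (T \subset U)%:R * ((-1) ^+ #|T| * h T).
have F_tog T : F (tog T) = - F T.
  have tog_B : tog T :&: B = T :&: B.
    apply/setP=> y; rewrite /tog !inE; case: ifP => _; rewrite !inE;
      by case: eqP => [->|]; rewrite ?(negbTE xNB) ?andbF.
  rewrite /F (hB (tog T)) tog_B -(hB T) /tog; case: ifP => xT.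
    rewrite subDset setUC (setUidPl _) ?sub1set //.
    by rewrite (cardsD1 x T) xT exprS mulN1r !mulNr mulrN opprK.
  rewrite subUset sub1set xU cardsU1 xT exprS mulN1r.
  by rewrite !mulNr mulrN.
rewrite big_mkcond (eq_bigr F) => [|T _]; last first.
  by rewrite /F; case: (T \subset U); rewrite ?mul1r ?mul0r.
rewrite (bigID (fun T : {set I} => x \in T)) /= (reindex_inj (inv_inj togK)) /=.
under eq_bigl do rewrite in_tog.
by under eq_bigr do rewrite F_tog; rewrite sumrN addNr.
Qed.

Lemma alternating_sum_deg_lt d f U : deg_le d f -> (d < #|U|)%N ->
  \sum_(T : {set I} | T \subset U) (-1) ^+ #|T| * f T = 0.
Proof.
move=> [J [c [h [cd hc fh]]]] ltdU.
under eq_bigr do rewrite fh mulr_sumr.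
rewrite exchange_big big1 // => j _; apply: alternating_sum_local (hc j) _.
by apply: contraL ltdU => /subset_leq_card leUc; rewrite -leqNgt (leq_trans leUc).
Qed.

End DegreeOfSetFunctions.

Arguments deg_le_cst {R I}.

Lemma subr_expf_card_pred (F : finFieldType) (x : F) : 1 - x ^+ #|F|.-1 = (x == 0)%:R.
Proof.
have F_gt1 := card_finNzRing_gt1 F.
have q_gt0 : (0 < #|F|.-1)%N by rewrite -ltnS prednK // ltnW.
have [->|x0] := eqVneq x 0; first by rewrite expr0n gtn_eqF // subr0.
suff -> : x ^+ #|F|.-1 = 1 by rewrite subrr.
by apply: (mulfI x0); rewrite -exprS prednK ?expf_card ?mulr1 // ltnW.
Qed.

Lemma prodr_nat_bool (R : comPzSemiRingType) (K : finType) (b : K -> bool) :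
  \prod_x (b x)%:R = [forall x, b x]%:R :> R.
Proof.
have [/forallP bT | /forallPn[x /negbTE bx]] := boolP [forall x, b x].
  by apply: big1 => x _; rewrite bT.
by rewrite (bigD1 x) //= bx mul0r.
Qed.

Lemma deg_le_sum_eq0 (F : finFieldType) (I : finType) r (g : I -> 'rV[F]_r) :
  deg_le (#|F|.-1 * r) (fun T => (\sum_(i in T) g i == 0)%:R : F).
Proof.
have dF (j : 'I_r) :
    deg_le #|F|.-1 (fun T => 1 - (\sum_(i in T) g i 0 j) ^+ #|F|.-1).
  have := deg_leX #|F|.-1 (deg_le_sum_in (I := I) (fun i => g i 0 j)).
  rewrite mul1n => /deg_leN dN.
  by apply: (deg_le_eq (deg_leD (deg_le_cst _ 1) dN)).
rewrite -[r in deg_le (_ * r)]card_ord; apply: (deg_le_eq (deg_le_prod dF)) => T.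
under eq_bigr do rewrite subr_expf_card_pred.
rewrite prodr_nat_bool; congr (nat_of_bool _)%:R.
apply/forallP/eqP => [sum0 | sum0 j]; last by rewrite -summxE sum0 mxE.
by apply/rowP => j; rewrite summxE !mxE; apply/eqP.
Qed.

Lemma prime_dvd_bin_pexp p j i : prime p -> (0 < i < p ^ j)%N -> (p %| 'C(p ^ j, i))%N.
Proof.
move=> p_pr /andP[i_gt0 lt_i_pj]; apply: contraT => p_ndvd.
have cop : coprime (p ^ j) 'C(p ^ j, i) by rewrite coprimeXl // prime_coprime.
have : (p ^ j %| i * 'C(p ^ j, i))%N.
  by rewrite -[i](prednK i_gt0) -mul_bin_diag dvdn_mulr.
by rewrite Gauss_dvdl // => /(dvdn_leq i_gt0); rewrite leqNgt lt_i_pj.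
Qed.

(* Modulo [p], only the two extreme terms of Vandermonde's convolution for
   ['C(p ^ j + u * p ^ j, p ^ j)] survive. *)
Lemma bin_mul_pexp_Fp p j u : prime p -> 'C(u * p ^ j, p ^ j)%:R = u%:R :> 'F_p.
Proof.
move=> p_pr; have pj_gt0 : (0 < p ^ j)%N by rewrite expn_gt0 prime_gt0.
elim: u => [|u IHu]; first by rewrite mul0n bin_small.
rewrite mulSn -binomial.Vandermonde natr_sum (bigD1 ord0) //= (bigD1 ord_max) /=; last first.
  by rewrite -val_eqE /= -lt0n.
rewrite big1 ?addr0 => [|i /andP[i_neq0 i_neq_max]].
  by rewrite subn0 subnn !bin0 binn !mul1n IHu addrC -mulrS.
have i_range : (0 < i < p ^ j)%N.
  move: i_neq0 i_neq_max; rewrite -!val_eqE /= => i_neq0 i_neq_max.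
  by rewrite lt0n i_neq0 ltn_neqAle i_neq_max -ltnS ltn_ord.
have : (p %| 'C(p ^ j, i))%N by apply: prime_dvd_bin_pexp.
by rewrite natrM (dvdn_pcharf (pchar_Fp p_pr)) => /eqP ->; rewrite mul0r.
Qed.

Lemma dvdn_pexpS_bin p m t : prime p ->
  (p ^ m.+1 %| t)%N = (p ^ m %| t)%N && (p %| 'C(t, p ^ m))%N.
Proof.
move=> p_pr; have [/dvdnP[u ->] | pm_ndvd] /= := boolP (p ^ m %| t)%N.
  rewrite expnSr [(u * _)%N]mulnC dvdn_pmul2l ?expn_gt0 ?prime_gt0 // mulnC.
  by rewrite !(dvdn_pcharf (pchar_Fp p_pr)) bin_mul_pexp_Fp.
by apply: contraNF pm_ndvd; apply: dvdn_trans; rewrite dvdn_exp2l.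
Qed.

(* Induction on [m]: [p ^ m.+1 %| #|T|] is [p ^ m %| #|T|] times the indicator
   [1 - 'C(#|T|, p ^ m) ^+ p.-1] of [p %| 'C(#|T|, p ^ m)]. *)
Lemma deg_le_dvdn_card p m (I : finType) : prime p ->
  deg_le (p ^ m - 1) (fun T : {set I} => (p ^ m %| #|T|)%:R : 'F_p).
Proof.
move=> p_pr; elim: m => [|m IHm].
  by apply: (deg_le_eq (deg_le_cst _ 1)) => T; rewrite dvd1n.
have dC := deg_leX p.-1 (@deg_le_bin 'F_p I (p ^ m)).
have := deg_leM IHm (deg_leD (deg_le_cst _ 1) (deg_leN dC)).
have -> : (p ^ m - 1 + p ^ m * p.-1 = p ^ m.+1 - 1)%N.
  have pm_gt0 : (0 < p ^ m)%N by rewrite expn_gt0 prime_gt0.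
  have p_gt0 := prime_gt0 p_pr.
  by rewrite expnSr; set q := (p ^ m)%N in pm_gt0 *; nia.
move/deg_le_eq; apply=> T.
have := subr_expf_card_pred ('C(#|T|, p ^ m)%:R : 'F_p).
rewrite card_Fp // => ->; rewrite -(dvdn_pcharf (pchar_Fp p_pr)) dvdn_pexpS_bin //.
by case: (_ %| _)%N; rewrite ?mul0r ?mul1r.
Qed.

Definition zero_sum (G : zmodType) (I : finType) (g : I -> G) (T : {set I}) :=
  (T != set0) && (\sum_(i in T) g i == 0).

Lemma subset_of_card (I : finType) (U : {set I}) n :
  (n <= #|U|)%N -> exists2 V : {set I}, V \subset U & #|V| = n.
Proof.
move=> le_nU; have : (0 < #|[set V : {set I} | V \subset U & #|V| == n]|)%N.
  by rewrite cards_draws bin_gt0.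
by case/card_gt0P=> V; rewrite inE => /andP[VU /eqP cardV]; exists V.
Qed.

Lemma exists_zero_sum_pexp_card p r m (I : finType) (g : I -> 'rV['F_p]_r)
    (U : {set I}) : prime p -> (r * p.-1 + p ^ m <= #|U|)%N ->
  exists T : {set I}, [/\ T \subset U, zero_sum g T, (p ^ m %| #|T|)%N
              & (#|T| <= r * p.-1 + p ^ m)%N].
Proof.
move=> p_pr /subset_of_card[V VU cardV].
pose f (T : {set I}) := (\sum_(i in T) g i == 0)%:R * (p ^ m %| #|T|)%:R : 'F_p.
have deg_f : deg_le (#|'F_p|.-1 * r + (p ^ m - 1)) f.
  exact: deg_leM (deg_le_sum_eq0 g) (deg_le_dvdn_card m I p_pr).
have deg_lt : (#|'F_p|.-1 * r + (p ^ m - 1) < #|V|)%N.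
  have pm_gt0 : (0 < p ^ m)%N by rewrite expn_gt0 prime_gt0.
  by rewrite card_Fp // cardV; lia.
case: (pickP [pred T : {set I} | [&& T \subset V, zero_sum g T & p ^ m %| #|T|]%N])
    => [T /and3P[TV zsT dvdT] | no_zero_sum].
  exists T; split=> //; first exact: subset_trans VU.
  by rewrite -cardV subset_leq_card.
have := alternating_sum_deg_lt deg_f deg_lt.
rewrite (bigD1 set0) ?sub0set //= big1 => [|T /andP[TV T0]].
  by rewrite /f cards0 big_set0 eqxx dvdn0 !mulr1 addr0 => /eqP; rewrite oner_eq0.
have := no_zero_sum T; rewrite /= TV /zero_sum T0 /f.
by case: (_ == 0); case: (_ %| _)%N => //= _; rewrite (mul0r, mulr0) mulr0.
Qed.

Lemma exists_zero_sum p r (I : finType) (g : I -> 'rV['F_p]_r) (U : {set I}) :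
  prime p -> (r * p.-1 + 1 <= #|U|)%N -> exists2 T : {set I}, T \subset U & zero_sum g T.
Proof.
move=> p_pr cardU; have cardU0 : (r * p.-1 + p ^ 0 <= #|U|)%N by rewrite expn0.
by have [T [TU zsT _ _]] := exists_zero_sum_pexp_card g p_pr cardU0; exists T.
Qed.

Lemma zero_sum_split p r (I : finType) (g : I -> 'rV['F_p]_r) (T : {set I}) :
  prime p -> zero_sum g T -> (r * p.-1 + 2 <= #|T|)%N ->
  exists2 T1 : {set I}, T1 \subset T & zero_sum g T1 /\ (2 * #|T1| <= #|T|)%N.
Proof.
move=> p_pr /andP[_ /eqP sumT] cardT.
have /card_gt0P[x xT] : (0 < #|T|)%N by apply: leq_trans cardT; rewrite addn2.
have cardTx : (r * p.-1 + 1 <= #|T :\ x|)%N.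
  by move: cardT; rewrite (cardsD1 x T) xT addn2 addn1.
have [T1 T1Tx zsT1] := exists_zero_sum g p_pr cardTx.
have T1T : T1 \subset T := subset_trans T1Tx (subD1set T x).
have zsT2 : zero_sum g (T :\: T1).
  apply/andP; split.
    have xNT1 : x \notin T1 by apply/negP => /(subsetP T1Tx); rewrite !inE eqxx.
    by apply/set0Pn; exists x; rewrite inE xT xNT1.
  move: sumT; rewrite (big_setID T1) /= (setIidPr T1T).
  by case/andP: zsT1 => _ /eqP ->; rewrite add0r => ->.
have := cardsID T1 T; rewrite (setIidPr T1T) => cardT12.
case: (leqP (2 * #|T1|) #|T|) => [le_T1 | lt_T1]; first by exists T1.
by exists (T :\: T1); rewrite ?subsetDl //; split; last lia.
Qed.

Lemma short_zero_sum p r m L (I : finType) (g : I -> 'rV['F_p]_r) (U : {set I}) :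
  prime p -> (r * p.-1 + p ^ m <= #|U|)%N ->
  (forall c, (0 < c)%N -> (c * p ^ m <= r * p.-1 + p ^ m)%N ->
     (c * p ^ m <= L)%N \/ (r * p.-1 + 2 <= c * p ^ m <= 2 * L)%N) ->
  exists T : {set I}, [/\ T \subset U, zero_sum g T & (#|T| <= L)%N].
Proof.
move=> p_pr cardU short_multiples.
have [T [TU zsT /dvdnP[c cardT] le_T]] := exists_zero_sum_pexp_card g p_pr cardU.
have c_gt0 : (0 < c)%N.
  by case/andP: zsT; rewrite -card_gt0 cardT muln_gt0 => /andP[].
rewrite cardT in le_T; case: (short_multiples c c_gt0 le_T) => [le_TL | /andP[ge_T le_T2L]].
  by exists T; rewrite cardT.
rewrite -cardT in ge_T le_T2L.
have [T1 T1T [zsT1 le_T1]] := zero_sum_split p_pr zsT ge_T.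
by exists T1; split; [apply: subset_trans TU | | lia].
Qed.

Lemma short_zero_sum_mul_p p r (I : finType) (g : I -> 'rV['F_p]_r) (U : {set I}) :
  prime p -> (2 <= r)%N -> (r * p.-1 + 1 + (r - 1) * p <= #|U|)%N ->
  exists T : {set I}, [/\ T \subset U, zero_sum g T & (#|T| <= (r - 1) * p)%N].
Proof.
move=> p_pr r_ge2 cardU; have p_gt1 := prime_gt1 p_pr.
apply: (short_zero_sum (m := 1)); rewrite ?expn1 //.
  apply: leq_trans cardU; rewrite -addnA leq_add2l.
  by rewrite (leq_trans _ (leq_addl _ _)) // leq_pmull // subn_gt0.
move=> c c_gt0 le_cp.
have le_cr : (c <= r)%N by nia.
have [le_cr1 | gt_cr1] := leqP c (r - 1); first by left; rewrite leq_mul2r le_cr1 orbT.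
have -> : c = r by lia.
by right; apply/andP; split; nia.
Qed.

Lemma short_zero_sum_pexp p r m (I : finType) (g : I -> 'rV['F_p]_r) (U : {set I}) :
  prime p -> (r * p.-1 + 1 < 2 * p ^ m)%N -> (r * p.-1 + 1 + p ^ m <= #|U|)%N ->
  exists T : {set I}, [/\ T \subset U, zero_sum g T & (#|T| <= p ^ m)%N].
Proof.
move=> p_pr small_pm cardU; apply: (short_zero_sum (m := m)) => [//||c c_gt0 le_cq].
  by apply: leq_trans cardU; rewrite -addnA leq_add2l.
move: small_pm le_cq; set q := (p ^ m)%N; set X := (r * p.-1)%N => small_q le_cq.
have le_c2 : (c <= 2)%N by nia.
have [le_c1 | gt_c1] := leqP c 1; first by left; nia.
have -> : c = 2 by lia.
by right; apply/andP; split; lia.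
Qed.

Lemma disjoint_zero_sums (G : zmodType) (I : finType) (g : I -> G) (d L : nat) :
  (forall U : {set I}, (d <= #|U|)%N -> exists2 T : {set I}, T \subset U & zero_sum g T) ->
  (forall U : {set I}, (d + L <= #|U|)%N ->
     exists T : {set I}, [/\ T \subset U, zero_sum g T & (#|T| <= L)%N]) ->
  forall k (U : {set I}), (d + k * L <= #|U|)%N ->
  exists S : seq {set I}, [/\ size S = k.+1,
    all (fun T : {set I} => (T \subset U) && zero_sum g T) S
    & pairwise (fun A B : {set I} => [disjoint A & B]) S].
Proof.
move=> zero_sum_d short_zero_sum_dL; elim=> [|k IHk] U cardU.
  have [T TU zsT] := zero_sum_d U (leq_trans (leq_addr _ _) cardU).
  by exists [:: T]; rewrite /= TU zsT.
have [T [TU zsT le_TL]] : exists T : {set I}, [/\ T \subset U, zero_sum g T & (#|T| <= L)%N].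
  by apply: short_zero_sum_dL; apply: leq_trans cardU; rewrite mulSn addnA leq_addr.
have [|S [sizeS SUT disjS]] := IHk (U :\: T).
  by rewrite cardsDS //; move: cardU; rewrite mulSn; lia.
exists (T :: S); rewrite /= sizeS TU zsT disjS; split=> //.
  by apply: sub_all _ SUT => A /andP[/subsetDP[AU _] ->]; rewrite AU.
rewrite andbT; apply/allP => A /(allP SUT) /andP[/subsetDP[_ disjAT] _].
by rewrite disjoint_sym.
Qed.

Lemma has_disjoint_zero_sums_seq (G : zmodType) (s : seq G) (S : seq {set 'I_(size s)}) :
  all (zero_sum (fun i : 'I_(size s) => s`_i)) S ->
  pairwise (fun A B : {set 'I_(size s)} => [disjoint A & B]) S ->
  has_k_disjoint_zero_sums (size S) s.
Proof.
move=> /all_nthP zsS /pairwiseP disjS.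
exists (fun j => nth set0 S j); split; [|split].
- by move=> j; case/andP: (zsS set0 j (ltn_ord j)).
- by move=> j; case/andP: (zsS set0 j (ltn_ord j)) => _ /eqP.
move=> j j'; rewrite -val_eqE neq_ltn => /orP[] lt_jj'; last rewrite disjoint_sym.
  by apply: disjS; rewrite // inE.
by apply: disjS; rewrite // inE.
Qed.

Lemma Dk_le (G : finZmodType) k l : Dk_prop G k l -> (Dk G k <= l)%N.
Proof.
rewrite /Dk; case: excluded_middle_informative => // ex_l Dk_l.
case: ex_minnP => l' _; apply.
by rewrite /Dk_predb; case: excluded_middle_informative.
Qed.

Lemma Dk0 (G : finZmodType) : Dk G 0 = 0%N.
Proof.
apply/eqP; rewrite -leqn0; apply: Dk_le => s _.
by exists (fun=> set0); split; [|split]; case.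
Qed.

Lemma Dk_le_short_zero_sums (G : finZmodType) d L k :
  (forall n (g : 'I_n -> G) (U : {set 'I_n}), (d <= #|U|)%N ->
     exists2 T : {set 'I_n}, T \subset U & zero_sum g T) ->
  (forall n (g : 'I_n -> G) (U : {set 'I_n}), (d + L <= #|U|)%N ->
     exists T : {set 'I_n}, [/\ T \subset U, zero_sum g T & (#|T| <= L)%N]) ->
  (Dk G k.+1 <= d + k * L)%N.
Proof.
move=> zero_sum_d short_zero_sum_dL; apply: Dk_le => s le_s.
have cardT : (d + k * L <= #|[set: 'I_(size s)]|)%N by rewrite cardsT card_ord.
have [S [sizeS zsS disjS]] :=
  disjoint_zero_sums (zero_sum_d _ (fun i => s`_i)) (short_zero_sum_dL _ _) cardT.
rewrite -sizeS; apply: has_disjoint_zero_sums_seq disjS.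
by apply: sub_all zsS => T /andP[].
Qed.

Theorem proposition3p5 (p r k m : nat) :
  prime p -> (2 <= r)%N ->
  (r * (p - 1) + 1 < 2 * p ^ m)%N ->
  (Dk ('rV['F_p]_r : finZmodType) k <=
     minn ((k * (r - 1) + 1) * p + 1 - r) ((k - 1) * p ^ m + r * (p - 1) + 1))%N.
Proof.
move=> p_pr r_ge2; rewrite [(p - 1)%N]subn1 => small_pm.
case: k => [|k]; first by rewrite Dk0.
rewrite leq_min; apply/andP; split.
- have p_gt1 := prime_gt1 p_pr; have r_gt0 : (0 < r)%N by apply: ltnW.
  have rp : ((r - 1) * p + p = r * p.-1 + r)%N.
    by rewrite -mulSnr subn1 prednK // -mulnSr prednK // ltnW.
  have -> : ((k.+1 * (r - 1) + 1) * p + 1 - r = r * p.-1 + 1 + k * ((r - 1) * p))%N.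
    rewrite mulSnr !mulnDl mul1n -mulnA -(addnA _ _ p) rp.
    by set a := (k * _)%N; set b := (r * p.-1)%N; lia.
  apply: Dk_le_short_zero_sums => n g U cardU; first exact: exists_zero_sum.
  exact: short_zero_sum_mul_p.
- have -> : ((k.+1 - 1) * p ^ m + r * p.-1 + 1 = r * p.-1 + 1 + k * p ^ m)%N.
    by rewrite subn1 -addnA addnC.
  apply: Dk_le_short_zero_sums => n g U cardU; first exact: exists_zero_sum.
  exact: short_zero_sum_pexp.
Qed.
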